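(* Let $f:[0,\infty)\to[0,\infty)$ be a strictly increasing bijection with $f(0)=0$, let $0<m<M$, and let $\sigma$ be a matrix mean. If the inverse function $f^{-1}$ is differentiable and convex, then $$\frac{f(M)}{M}(A\sigma B)\le f(A)\sigma f(B)\le \frac{f(m)}{m}(A\sigma B)$$ for all $A,B\in\mathbb{P}_n^+$ with spectra contained in $[m,M]$. If $f^{-1}$ is differentiable and concave, then $$\frac{f(m)}{m}(A\sigma B)\le f(A)\sigma f(B)\le \frac{f(M)}{M}(A\sigma B)$$ for all such $A,B$.
   Context: $\mathbb{P}_n$ (resp. $\mathbb{P}_n^+$) denotes the set of $n\times n$ complex positive semidefinite (resp. positive definite) matrices, $I$ is the identity matrix and $\le$ is the Löwner order. For a Hermitian matrix $A$ and a real function $f$ defined on its spectrum, $f(A)$ is defined by functional calculus. ''Spectrum contained in $[m,M]$'' means $mI\le A\le MI$. A matrix mean is a binary operation $\sigma:\mathbb{P}_n\times\mathbb{P}_n\to\mathbb{P}_n$ such that (i) $A\le C$ and $B\le D$ imply $A\sigma B\le C\sigma D$; (ii) $C^*(A\sigma B)C\le (C^*AC)\sigma(C^*BC)$ for all $C$; (iii) if $A_k\downarrow A$ and $B_k\downarrow B$ (decreasing sequences converging) then $A_k\sigma B_k\downarrow A\sigma B$; (iv) $I\sigma I=I$. *)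

From HB Require Import structures.
From mathcomp Require Import all_boot all_order all_algebra.
From mathcomp Require Import complex.
From mathcomp Require Import all_classical all_reals topology normedtype sequences derive.
Set Implicit Arguments. Unset Strict Implicit. Unset Printing Implicit Defensive.
Import Order.TTheory GRing.Theory Num.Theory.
Import numFieldTopology.Exports numFieldNormedType.Exports.
Local Open Scope classical_set_scope.
Local Open Scope ring_scope.

Section MatrixDefs.
Variables (R : realType) (n : nat).
Local Notation C := (R[i]).

Definition adjmx (A : 'M[C]_n) : 'M[C]_n := (map_mx Num.conj A)^T.

Definition qform (A : 'M[C]_n) (v : 'cV[C]_n) : C :=
  ((map_mx Num.conj v)^T *m A *m v) 0 0.

Definition psd (A : 'M[C]_n) : Prop :=
  adjmx A = A /\ forall v : 'cV[C]_n, 0 <= qform A v.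

Definition pd (A : 'M[C]_n) : Prop :=
  adjmx A = A /\ forall v : 'cV[C]_n, v != 0 -> 0 < qform A v.

Definition lowner (A B : 'M[C]_n) : Prop := psd (B - A).

Definition mx_cvg (u : nat -> 'M[C]_n) (A : 'M[C]_n) : Prop :=
  forall i j : 'I_n,
    (fun k => complex.Re (u k i j)) @ \oo --> complex.Re (A i j) /\
    (fun k => complex.Im (u k i j)) @ \oo --> complex.Im (A i j).

Definition mx_decr_to (u : nat -> 'M[C]_n) (A : 'M[C]_n) : Prop :=
  (forall k, lowner (u k.+1) (u k)) /\ mx_cvg u A.

Definition unitary (U : 'M[C]_n) : Prop := U *m adjmx U = 1%:M.

(** For Hermitian A this determines FA = f(A)
    uniquely (and such a decomposition exists by the spectral theorem). *)
Definition funcalc (f : R -> R) (A FA : 'M[C]_n) : Prop :=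
  exists (U : 'M[C]_n) (d : 'rV[R]_n),
    [/\ unitary U,
        A = U *m diag_mx (map_mx (fun x => x%:C%C) d) *m adjmx U
      & FA = U *m diag_mx (map_mx (fun x => (f x)%:C%C) d) *m adjmx U].

Definition matrix_mean (sigma : 'M[C]_n -> 'M[C]_n -> 'M[C]_n) : Prop :=
  [/\ (forall A B, psd A -> psd B -> psd (sigma A B)),
      (forall A B C' D, psd A -> psd B -> psd C' -> psd D ->
         lowner A C' -> lowner B D -> lowner (sigma A B) (sigma C' D)),
      (forall (T : 'M[C]_n) A B, psd A -> psd B ->
         lowner (adjmx T *m sigma A B *m T)
                (sigma (adjmx T *m A *m T) (adjmx T *m B *m T))),
      (forall (Ak Bk : nat -> 'M[C]_n) A B,
         (forall k, psd (Ak k)) -> (forall k, psd (Bk k)) -> psd A -> psd B ->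
         mx_decr_to Ak A -> mx_decr_to Bk B ->
         mx_decr_to (fun k => sigma (Ak k) (Bk k)) (sigma A B))
    &
      sigma 1%:M 1%:M = 1%:M].

End MatrixDefs.

Definition convex_on_nonneg (R : realType) (g : R -> R) : Prop :=
  forall x y t : R, 0 <= x -> 0 <= y -> 0 <= t -> t <= 1 ->
    g (t * x + (1 - t) * y) <= t * g x + (1 - t) * g y.

Definition concave_on_nonneg (R : realType) (g : R -> R) : Prop :=
  forall x y t : R, 0 <= x -> 0 <= y -> 0 <= t -> t <= 1 ->
    t * g x + (1 - t) * g y <= g (t * x + (1 - t) * y).

Definition differentiable_on_nonneg (R : realType) (g : R -> R) : Prop :=
  (forall x : R, 0 < x -> derivable g x 1) /\
  cvg ((fun h : R => h^-1 * (g h - g 0)) @ 0^'+).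

From HB Require Import structures.
From mathcomp Require Import all_boot all_order all_algebra.
From mathcomp Require Import complex.
From mathcomp Require Import all_classical all_reals topology normedtype sequences derive.
Import Order.TTheory GRing.Theory Num.Theory.
Local Open Scope ring_scope.
Set Implicit Arguments. Unset Strict Implicit.

(** If [c1 * x <= f x <= c2 * x] for every x in the spectral interval
   [m, M], then functional calculus gives [c1 A <= f(A) <= c2 A] in the
   Loewner order; monotonicity and positive homogeneity of a matrix mean then
   give [c1 (A σ B) <= f(A) σ f(B) <= c2 (A σ B)].  The constants come from
   the monotonicity of the ratio [f x / x]: if [f^{-1}] is convex (resp.
   concave) with [f^{-1}(0) = 0], its chord slopes [f^{-1}(y) / y] increase
   (resp. decrease), so [f x / x] decreases (resp. increases) in x > 0. *)

Section LoewnerAlgebra.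
Variables (R : realType) (n : nat).
Local Notation C := (R[i]).
Local Notation M_ := ('M[C]_n).

Lemma adjmxM (A B : M_) : adjmx (A *m B) = adjmx B *m adjmx A.
Proof. by rewrite /adjmx map_mxM trmx_mul. Qed.

Lemma adjmxK (A : M_) : adjmx (adjmx A) = A.
Proof. by apply/matrixP => i j; rewrite !mxE conjCK. Qed.

Lemma adjmxD (A B : M_) : adjmx (A + B) = adjmx A + adjmx B.
Proof. by apply/matrixP => i j; rewrite !mxE rmorphD. Qed.

Lemma adjmxZ (c : R) (A : M_) : adjmx (c%:C%C *: A) = c%:C%C *: adjmx A.
Proof.
by apply/matrixP => i j; rewrite !mxE rmorphM; congr (_ * _); exact: conjc_real.
Qed.

Lemma adjmx1 : adjmx (1%:M : M_) = 1%:M.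
Proof. by apply/matrixP => i j; rewrite !mxE rmorphMn rmorph1 eq_sym. Qed.

Lemma qform_congr (T X : M_) v : qform (adjmx T *m X *m T) v = qform X (T *m v).
Proof. by rewrite /qform /adjmx map_mxM trmx_mul !mulmxA. Qed.

Lemma qformD (X Y : M_) v : qform (X + Y) v = qform X v + qform Y v.
Proof. by rewrite /qform mulmxDr mulmxDl mxE. Qed.

Lemma qformZ (a : C) (X : M_) v : qform (a *: X) v = a * qform X v.
Proof. by rewrite /qform -scalemxAr -scalemxAl mxE. Qed.

Lemma psdD (X Y : M_) : psd X -> psd Y -> psd (X + Y).
Proof.
move=> [hX qX] [hY qY]; split; first by rewrite adjmxD hX hY.
by move=> v; rewrite qformD addr_ge0.
Qed.

Lemma psdZ (c : R) (X : M_) : 0 <= c -> psd X -> psd (c%:C%C *: X).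
Proof.
move=> c0 [hX qX]; split; first by rewrite adjmxZ hX.
by move=> v; rewrite qformZ mulr_ge0 // ler0c.
Qed.

Lemma pd_psd (A : M_) : pd A -> psd A.
Proof.
move=> [hA qA]; split=> // v; have [->|v_nz] := eqVneq v 0.
  by rewrite /qform mulmx0 mxE.
exact: ltW (qA v v_nz).
Qed.

Lemma lowner_trans (X Y Z : M_) : lowner X Y -> lowner Y Z -> lowner X Z.
Proof. by rewrite /lowner -[Z - X](subrKA Y) addrC => *; apply: psdD. Qed.

Lemma lowner_psd (X Y : M_) : psd X -> lowner X Y -> psd Y.
Proof. by rewrite /lowner => pX pYX; rewrite -(subrK X Y); apply: psdD. Qed.

Lemma lownerZ (c : R) (X Y : M_) :
  0 <= c -> lowner X Y -> lowner (c%:C%C *: X) (c%:C%C *: Y).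
Proof. by rewrite /lowner -scalerBr; apply: psdZ. Qed.

End LoewnerAlgebra.

Section MeanHomogeneity.
Variables (R : realType) (n : nat).
Local Notation C := (R[i]).
Local Notation M_ := ('M[C]_n).
Variable sigma : M_ -> M_ -> M_.
Hypothesis mean_sigma : matrix_mean sigma.

Lemma congr_sqrt_scalar (c : R) (X : M_) : 0 <= c ->
  adjmx ((Num.sqrt c)%:C%C *: 1%:M) *m X *m ((Num.sqrt c)%:C%C *: 1%:M)
  = c%:C%C *: X.
Proof.
move=> c0; rewrite adjmxZ adjmx1 -scalemxAl mul1mx -scalemxAr mulmx1 scalerA.
by rewrite -rmorphM -expr2 sqr_sqrtr.
Qed.

(** The transformer inequality with [T = sqrt c * I]: [c (A σ B) <= (cA) σ (cB)]. *)
Lemma mean_scale_le (c : R) (A B : M_) : 0 <= c -> psd A -> psd B ->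
  lowner (c%:C%C *: sigma A B) (sigma (c%:C%C *: A) (c%:C%C *: B)).
Proof.
case: mean_sigma => _ _ transformer _ _ c0 pA pB.
by have := transformer ((Num.sqrt c)%:C%C *: 1%:M) A B pA pB; rewrite !congr_sqrt_scalar.
Qed.

(** The reverse inequality, by applying [mean_scale_le] with [c^-1] to [cA, cB]. *)
Lemma mean_scale_ge (c : R) (A B : M_) : 0 < c -> psd A -> psd B ->
  lowner (sigma (c%:C%C *: A) (c%:C%C *: B)) (c%:C%C *: sigma A B).
Proof.
move=> c0 pA pB; have cK (X : M_) : c^-1%:C%C *: (c%:C%C *: X) = X.
  by rewrite scalerA -rmorphM mulVf ?gt_eqF // scale1r.
have cV_ge0 : 0 <= c^-1 by rewrite invr_ge0 ltW.
have := @mean_scale_le c^-1 _ _ cV_ge0 (psdZ (ltW c0) pA) (psdZ (ltW c0) pB).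
rewrite !cK => /(lownerZ (ltW c0)).
by rewrite scalerA -rmorphM mulfV ?gt_eqF // scale1r.
Qed.

Lemma mean_sandwich (c1 c2 : R) (A B FA FB : M_) : 0 < c1 -> 0 < c2 ->
  psd A -> psd B ->
  lowner (c1%:C%C *: A) FA -> lowner FA (c2%:C%C *: A) ->
  lowner (c1%:C%C *: B) FB -> lowner FB (c2%:C%C *: B) ->
  lowner (c1%:C%C *: sigma A B) (sigma FA FB) /\
  lowner (sigma FA FB) (c2%:C%C *: sigma A B).
Proof.
move=> c1_gt0 c2_gt0 pA pB lA uA lB uB.
case: (mean_sigma) => _ monotone _ _ _.
have pc1A := psdZ (ltW c1_gt0) pA; have pc1B := psdZ (ltW c1_gt0) pB.
have pc2A := psdZ (ltW c2_gt0) pA; have pc2B := psdZ (ltW c2_gt0) pB.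
have pFA := lowner_psd pc1A lA; have pFB := lowner_psd pc1B lB.
split.
- apply: lowner_trans (@mean_scale_le c1 _ _ (ltW c1_gt0) pA pB) _.
  exact: monotone.
- apply: lowner_trans _ (@mean_scale_ge c2 _ _ c2_gt0 pA pB).
  exact: monotone.
Qed.

End MeanHomogeneity.

Section SpectralComparison.
Variables (R : realType) (n : nat).
Local Notation C := (R[i]).
Local Notation M_ := ('M[C]_n).
Variables (U : M_) (d : 'rV[R]_n).
Hypothesis U_unitary : unitary U.

Definition spec (g : R -> R) : M_ :=
  U *m diag_mx (map_mx (fun x => (g x)%:C%C) d) *m adjmx U.

Lemma spec_scalar (c : R) : c%:C%C *: 1%:M = spec (fun=> c).
Proof.
rewrite /spec; have -> : diag_mx (map_mx (fun=> c%:C%C) d) = c%:C%C *: (1%:M : M_).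
  by apply/matrixP => i j; rewrite !mxE; case: eqP; rewrite ?mulr1n ?mulr0n ?mulr1 ?mulr0.
by rewrite -scalemxAr mulmx1 -scalemxAl U_unitary.
Qed.

Lemma spec_scale (a : R) (g : R -> R) : a%:C%C *: spec g = spec (fun x => a * g x).
Proof.
rewrite /spec scalemxAl scalemxAr; congr (_ *m _ *m _).
by apply/matrixP => i j; rewrite !mxE; case: eqP; rewrite ?mulr1n ?mulr0n ?mulr0 // rmorphM.
Qed.

Lemma spec_sub (g h : R -> R) : spec h - spec g = spec (fun x => h x - g x).
Proof.
rewrite /spec -mulmxBl -mulmxBr; congr (_ *m _ *m _).
by apply/matrixP => i j; rewrite !mxE; case: eqP; rewrite ?mulr1n ?mulr0n ?subr0 // rmorphB.
Qed.

Lemma qform_spec_eigvec (g : R -> R) (j : 'I_n) :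
  qform (spec g) (U *m delta_mx j 0) = (g (d 0 j))%:C%C.
Proof.
rewrite /spec -{1}(adjmxK U) qform_congr mulmxA mulmx1C // mul1mx /qform.
have -> : (map_mx Num.conj (delta_mx j 0 : 'cV[C]_n))^T = delta_mx 0 j.
  by apply/matrixP => a b; rewrite !mxE andbC rmorph_nat.
by rewrite -rowE -colE !mxE eqxx mulr1n.
Qed.

Lemma psd_spec (g : R -> R) : (forall i, 0 <= g (d 0 i)) -> psd (spec g).
Proof.
move=> g_ge0; split.
  rewrite /spec !adjmxM adjmxK mulmxA; congr (_ *m _ *m _).
  apply/matrixP => i j; rewrite !mxE eq_sym.
  by case: eqP => [->|_]; rewrite ?mulr1n ?mulr0n ?rmorph0 //; exact: conjc_real.
move=> v; rewrite /spec -{1}(adjmxK U) qform_congr /qform mul_mx_diag mxE.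
apply: sumr_ge0 => i _; rewrite !mxE mulrC mulrA.
by apply: mulr_ge0; [exact: mulcJ_ge0 | rewrite ler0c].
Qed.

Lemma lowner_specP (g h : R -> R) :
  lowner (spec g) (spec h) <-> forall j, g (d 0 j) <= h (d 0 j).
Proof.
rewrite /lowner spec_sub; split.
- by move=> [_ q] j; have := q (U *m delta_mx j 0); rewrite qform_spec_eigvec ler0c subr_ge0.
- by move=> le_gh; apply: psd_spec => j; rewrite subr_ge0.
Qed.

Lemma spec_bounds (m M : R) :
  lowner (m%:C%C *: 1%:M) (spec id) -> lowner (spec id) (M%:C%C *: 1%:M) ->
  forall j, m <= d 0 j <= M.
Proof.
by rewrite !spec_scalar => /lowner_specP lo /lowner_specP up j; rewrite lo up.
Qed.

End SpectralComparison.

Lemma funcalc_sandwich (R : realType) (n : nat) (f : R -> R) (m M c1 c2 : R)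
    (A FA : 'M[R[i]]_n) :
  0 < m -> (forall x, m <= x -> x <= M -> c1 <= f x / x <= c2) ->
  lowner (m%:C%C *: 1%:M) A -> lowner A (M%:C%C *: 1%:M) -> funcalc f A FA ->
  lowner (c1%:C%C *: A) FA /\ lowner FA (c2%:C%C *: A).
Proof.
move=> m_gt0 ratio lA uA [U [d [U_unitary eA eFA]]].
have {}eA : A = spec U d id by [].
have {}eFA : FA = spec U d f by [].
rewrite {}eFA {}eA in lA uA *.
have spec_ratio j : 0 < d 0 j /\ c1 <= f (d 0 j) / d 0 j <= c2.
  have /andP[mdj dM] := spec_bounds U_unitary lA uA j.
  by split; [exact: lt_le_trans mdj | exact: ratio].
rewrite !spec_scale; split; apply/lowner_specP => // j /=.
all: have [dj_gt0 /andP[lo up]] := spec_ratio j.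
- by rewrite -ler_pdivlMr.
- by rewrite -ler_pdivrMr.
Qed.

Section ChordSlopes.
Variable R : realType.

Lemma convex_slope_mono (g : R -> R) : g 0 = 0 -> convex_on_nonneg g ->
  forall y Y, 0 < y -> y <= Y -> g y / y <= g Y / Y.
Proof.
move=> g0 g_cvx y Y y_gt0 yY; have Y_gt0 := lt_le_trans y_gt0 yY.
have t_ge0 : 0 <= y / Y by rewrite divr_ge0 ?ltW.
have t_le1 : y / Y <= 1 by rewrite ler_pdivrMr // mul1r.
have := g_cvx Y 0 (y / Y) (ltW Y_gt0) (lexx 0) t_ge0 t_le1.
rewrite g0 !mulr0 !addr0 divfK ?gt_eqF // => le_chord.
by rewrite ler_pdivrMr // (mulrC (g Y / Y)) mulrA mulrAC.
Qed.

Lemma concave_slope_anti (g : R -> R) : g 0 = 0 -> concave_on_nonneg g ->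
  forall y Y, 0 < y -> y <= Y -> g Y / Y <= g y / y.
Proof.
move=> g0 g_ccv y Y y_gt0 yY; have Y_gt0 := lt_le_trans y_gt0 yY.
have t_ge0 : 0 <= y / Y by rewrite divr_ge0 ?ltW.
have t_le1 : y / Y <= 1 by rewrite ler_pdivrMr // mul1r.
have := g_ccv Y 0 (y / Y) (ltW Y_gt0) (lexx 0) t_ge0 t_le1.
rewrite g0 !mulr0 !addr0 divfK ?gt_eqF // => le_chord.
by rewrite ler_pdivlMr // (mulrC (g Y / Y)) mulrA mulrAC.
Qed.

Variables (f finv : R -> R).
Hypotheses (f0 : f 0 = 0) (f_incr : forall x y, 0 <= x -> x < y -> f x < f y)
           (finvK : forall x, 0 <= x -> finv (f x) = x).

Lemma f_gt0 x : 0 < x -> 0 < f x.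
Proof. by move=> x_gt0; rewrite -f0 f_incr. Qed.

Lemma f_le x X : 0 < x -> x <= X -> f x <= f X.
Proof.
by move=> x_gt0; rewrite le_eqVlt => /predU1P[-> // | /(f_incr (ltW x_gt0))/ltW].
Qed.

Lemma finv0 : finv 0 = 0.
Proof. by rewrite -{1}f0 finvK. Qed.

(** The slope [f x / x] is the reciprocal of the slope of [finv] at [f x],
    so comparing slopes of [f] reverses the comparison for [finv]. *)
Lemma slope_inv x X : 0 < x -> 0 < X ->
  (f X / X <= f x / x) = (finv (f x) / f x <= finv (f X) / f X).
Proof.
move=> x_gt0 X_gt0; rewrite (finvK (ltW x_gt0)) (finvK (ltW X_gt0)).
rewrite -(invf_div (f x)) -(invf_div (f X)).
by rewrite lef_pV2 // posrE divr_gt0 ?f_gt0.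
Qed.

Lemma convex_inverse_slope_anti : convex_on_nonneg finv ->
  forall x X, 0 < x -> x <= X -> f X / X <= f x / x.
Proof.
move=> cvx x X x_gt0 xX; rewrite slope_inv //; last exact: lt_le_trans xX.
by apply: convex_slope_mono finv0 cvx _ _ (f_gt0 x_gt0) (f_le x_gt0 xX).
Qed.

Lemma concave_inverse_slope_mono : concave_on_nonneg finv ->
  forall x X, 0 < x -> x <= X -> f x / x <= f X / X.
Proof.
move=> ccv x X x_gt0 xX; rewrite slope_inv //; last exact: lt_le_trans xX.
by apply: concave_slope_anti finv0 ccv _ _ (f_gt0 x_gt0) (f_le x_gt0 xX).
Qed.

End ChordSlopes.

Unset Implicit Arguments.
Theorem proposition2p12 (R : realType) (n : nat)
  (f finv : R -> R) (m M : R)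
  (sigma : 'M[R[i]]_n -> 'M[R[i]]_n -> 'M[R[i]]_n) :
  (* f : [0,oo) -> [0,oo) strictly increasing bijection with f 0 = 0 *)
  f 0 = 0 ->
  (forall x, 0 <= x -> 0 <= f x) ->
  (forall x y, 0 <= x -> x < y -> f x < f y) ->
  (forall y, 0 <= y -> exists2 x, 0 <= x & f x = y) ->
  (* finv is the inverse function f^{-1} : [0,oo) -> [0,oo) *)
  (forall y, 0 <= y -> 0 <= finv y) ->
  (forall x, 0 <= x -> finv (f x) = x) ->
  (forall y, 0 <= y -> f (finv y) = y) ->
  0 < m -> m < M ->
  matrix_mean sigma ->
  (differentiable_on_nonneg finv -> convex_on_nonneg finv ->
   forall A B FA FB : 'M[R[i]]_n,
     pd A -> pd B ->
     lowner ((m%:C)%C *: 1%:M) A -> lowner A ((M%:C)%C *: 1%:M) ->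
     lowner ((m%:C)%C *: 1%:M) B -> lowner B ((M%:C)%C *: 1%:M) ->
     funcalc f A FA -> funcalc f B FB ->
     lowner (((f M / M)%:C)%C *: sigma A B) (sigma FA FB) /\
     lowner (sigma FA FB) (((f m / m)%:C)%C *: sigma A B)) /\
  (differentiable_on_nonneg finv -> concave_on_nonneg finv ->
   forall A B FA FB : 'M[R[i]]_n,
     pd A -> pd B ->
     lowner ((m%:C)%C *: 1%:M) A -> lowner A ((M%:C)%C *: 1%:M) ->
     lowner ((m%:C)%C *: 1%:M) B -> lowner B ((M%:C)%C *: 1%:M) ->
     funcalc f A FA -> funcalc f B FB ->
     lowner (((f m / m)%:C)%C *: sigma A B) (sigma FA FB) /\
     lowner (sigma FA FB) (((f M / M)%:C)%C *: sigma A B)).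
Proof.
move=> f0 _ f_incr _ _ finvK _ m_gt0 mM mean_sigma.
have M_gt0 := lt_trans m_gt0 mM.
have slope_m_gt0 : 0 < f m / m by rewrite divr_gt0 // (f_gt0 f0 f_incr).
have slope_M_gt0 : 0 < f M / M by rewrite divr_gt0 // (f_gt0 f0 f_incr).
have x_gt0 x : m <= x -> 0 < x by apply: lt_le_trans.
split=> _ finv_shape A B FA FB pA pB lA uA lB uB fA fB.
- have slopes x : m <= x -> x <= M -> f M / M <= f x / x <= f m / m.
    move=> mx xM; have := convex_inverse_slope_anti f0 f_incr finvK finv_shape.
    by move=> slope_anti; rewrite (slope_anti _ _ (x_gt0 x mx) xM) (slope_anti _ _ m_gt0 mx).
  have [lFA uFA] := funcalc_sandwich m_gt0 slopes lA uA fA.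
  have [lFB uFB] := funcalc_sandwich m_gt0 slopes lB uB fB.
  exact: (mean_sandwich mean_sigma slope_M_gt0 slope_m_gt0 (pd_psd pA) (pd_psd pB)
           lFA uFA lFB uFB).
- have slopes x : m <= x -> x <= M -> f m / m <= f x / x <= f M / M.
    move=> mx xM; have := concave_inverse_slope_mono f0 f_incr finvK finv_shape.
    by move=> slope_mono; rewrite (slope_mono _ _ m_gt0 mx) (slope_mono _ _ (x_gt0 x mx) xM).
  have [lFA uFA] := funcalc_sandwich m_gt0 slopes lA uA fA.
  have [lFB uFB] := funcalc_sandwich m_gt0 slopes lB uB fB.
  exact: (mean_sandwich mean_sigma slope_m_gt0 slope_M_gt0 (pd_psd pA) (pd_psd pB)
           lFA uFA lFB uFB).
Qed.
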